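(* Consider any learner in the $K$-armed bandit setting described in the context, and suppose the self-bounding condition holds with gap vector $\Delta$ and constant $C$. Then for every $x>0$ and every $z>0$, $$\mathbb{S}_1(x)\le z(\mathrm{Reg}^T+C)+\frac{1}{z}\cdot\frac{x}{4\Delta_{\min}},\qquad \mathbb{S}_2(x)\le z(\mathrm{Reg}^T+C)+\frac{1}{z}\sum_{i\in V}\frac{x}{4\Delta_i}.$$
   Context: Bandit setting: in round $t=1,\dots,T$ the learner picks $i^t\in[K]$ from a distribution $p^t$ (determined by the history before round $t$, so $\Pr[i^t=i]=\mathbb{E}[p^t_i]$), the environment picks $\ell^t\in[0,1]^K$; $\mathrm{Reg}^T=\mathbb{E}[\sum_t\ell^t_{i^t}-\sum_t\ell^t_{i^\star}]$ with $i^\star\in\arg\min_i\mathbb{E}[\sum_t\ell^t_i]$. Self-bounding condition: there exist $\Delta\in[0,1]^K$, $C\ge0$ with $\mathrm{Reg}^T\ge\mathbb{E}[\sum_{t}\sum_{i}\Pr[i^t=i]\Delta_i]-C$; $U=\{i:\Delta_i=0\}$, $V=[K]\setminus U$ (assumed nonempty), $\Delta_{\min}=\min_{i\in V}\Delta_i$. Self-bounding quantities: $\mathbb{S}_1(x)=\mathbb{E}\big[\sqrt{x\sum_{t=1}^T\sum_{i\in V}p^t_i}\big]$ and $\mathbb{S}_2(x)=\mathbb{E}\big[\sum_{i\in V}\sqrt{x\sum_{t=1}^Tp^t_i}\big]$. *)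

From HB Require Import structures.
From mathcomp Require Import all_boot all_order all_algebra.
From mathcomp Require Import all_classical all_reals all_analysis.
Set Implicit Arguments. Unset Strict Implicit. Unset Printing Implicit Defensive.
Import Order.TTheory GRing.Theory Num.Theory.
Local Open Scope classical_set_scope.
Local Open Scope ring_scope.
Local Open Scope ereal_scope.

Section Bandit.
Context {R : realType} {d : measure_display} {Omega : measurableType d}.
Variable (P : probability Omega R).

Definition Ex (f : Omega -> R) : \bar R := \int[P]_w (f w)%:E.

Definition Prob_arm {K : nat} (I : nat -> Omega -> 'I_K) (t : nat) (i : 'I_K)
  : \bar R := P [set w | I t w = i].

Definition Reg {K : nat} (T : nat) (I : nat -> Omega -> 'I_K)
  (ell : nat -> Omega -> 'I_K -> R) (istar : 'I_K) : \bar R :=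
  Ex (fun w => (\sum_(t < T) ell t w (I t w))%R)
  - Ex (fun w => (\sum_(t < T) ell t w istar)%R).

Definition S1 {K : nat} (T : nat) (Delta : 'I_K -> R)
  (p : nat -> Omega -> 'I_K -> R) (x : R) : \bar R :=
  Ex (fun w => Num.sqrt (x * \sum_(t < T) \sum_(i | Delta i != 0) p t w i))%R.

Definition S2 {K : nat} (T : nat) (Delta : 'I_K -> R)
  (p : nat -> Omega -> 'I_K -> R) (x : R) : \bar R :=
  Ex (fun w => \sum_(i | Delta i != 0) Num.sqrt (x * \sum_(t < T) p t w i))%R.

End Bandit.

(* Delta_min = min_{i in V} Delta_i ; since Delta_i <= 1 the neutral element 1
   is harmless when V is nonempty *)
Definition Delta_min {R : realType} {K : nat} (Delta : 'I_K -> R) : R :=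
  \big[Order.min/1%R]_(i | Delta i != 0%R) Delta i.

(* AM-GM gives, for every c > 0, the pointwise bound
   sqrt (x S) <= z c S + x / (4 z c).  Taking c = Delta_min (for S_1) or
   c = Delta_i arm by arm (for S_2) dominates the integrand by
   z * sum_t sum_i Delta_i p^t_i plus the claimed constant.  As
   Pr[i^t = i] = E[p^t_i], the expectation of sum_t sum_i Delta_i p^t_i is the
   left-hand side of the self-bounding condition, hence at most Reg^T + C. *)

From HB Require Import structures.
From mathcomp Require Import all_boot all_order all_algebra.
From mathcomp Require Import all_classical all_reals all_analysis.
From mathcomp Require Import ring measurable_realfun.
Set Implicit Arguments.
Unset Strict Implicit.
Unset Printing Implicit Defensive.
Import Order.TTheory GRing.Theory Num.Theory.
Local Open Scope classical_set_scope.
Local Open Scope ring_scope.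

Lemma sqrtr_mul_le (R : rcfType) (z c x y : R) :
  0 < z -> 0 < c -> 0 <= x -> 0 <= y ->
  Num.sqrt (x * y) <= z * (c * y) + z^-1 * (x / (4 * c)).
Proof.
move=> z0 c0 x0 y0.
set a := z * (c * y); set b := z^-1 * (x / (4 * c)).
have a0 : 0 <= a by rewrite /a !mulr_ge0 // ltW.
have b0 : 0 <= b by rewrite /b !(mulr_ge0, divr_ge0, invr_ge0) // ltW.
have -> : x * y = a * b *+ 4.
  by rewrite -mulr_natr /a /b; field; rewrite !gt_eqF.
rewrite -[leRHS]ger0_norm ?addr_ge0 // -sqrtr_sqr ler_sqrt ?sqr_ge0 //.
exact: (leif_AGM2_scaled a b).1.
Qed.

Section GapSum.
Variables (R : realType) (K T : nat) (Delta : 'I_K -> R).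
Hypothesis Delta_ge0 : forall i, 0 <= Delta i.

Definition gap_sum (q : nat -> 'I_K -> R) : R :=
  \sum_(t < T) \sum_i Delta i * q t i.

Lemma Delta_gt0 i : Delta i != 0 -> 0 < Delta i.
Proof. by move=> Di; rewrite lt_def Di Delta_ge0. Qed.

Lemma Delta_min_gt0 : 0 < Delta_min Delta.
Proof. by apply: lt_bigmin => //; exact: Delta_gt0. Qed.

Lemma Delta_min_le j : Delta j != 0 -> Delta_min Delta <= Delta j.
Proof. exact: (@bigmin_le_cond _ R _ 1 j _ Delta). Qed.

Lemma gap_sum_ge0 q : (forall t i, 0 <= q t i) -> 0 <= gap_sum q.
Proof.
by move=> q0; apply: sumr_ge0 => t _; apply: sumr_ge0 => i _; rewrite mulr_ge0.
Qed.

Lemma gap_sumE q :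
  gap_sum q = \sum_(i | Delta i != 0) Delta i * \sum_(t < T) q t i.
Proof.
rewrite /gap_sum exchange_big (bigID (fun i => Delta i != 0)) /=.
rewrite [X in _ + X]big1 ?addr0 => [|i /negPn/eqP Di0]; last first.
  by rewrite big1 // => t _; rewrite Di0 mul0r.
by apply: eq_bigr => i _; rewrite mulr_sumr.
Qed.

Variable q : nat -> 'I_K -> R.
Hypothesis q_ge0 : forall t i, 0 <= q t i.

Lemma sqrt_sum_le_gap_sum (x z : R) : 0 <= x -> 0 < z ->
  Num.sqrt (x * \sum_(t < T) \sum_(i | Delta i != 0) q t i)
    <= z * gap_sum q + z^-1 * (x / (4 * Delta_min Delta)).
Proof.
move=> x0 z0; rewrite exchange_big /=.
apply: le_trans (sqrtr_mul_le z0 Delta_min_gt0 x0 _) _.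
  by apply: sumr_ge0 => i _; apply: sumr_ge0.
rewrite lerD2r; apply: ler_wpM2l; first exact: ltW.
rewrite gap_sumE mulr_sumr; apply: ler_sum => i Di.
by rewrite ler_wpM2r ?sumr_ge0 ?Delta_min_le.
Qed.

Lemma sum_sqrt_le_gap_sum (x z : R) : 0 <= x -> 0 < z ->
  \sum_(i | Delta i != 0) Num.sqrt (x * \sum_(t < T) q t i)
    <= z * gap_sum q + z^-1 * \sum_(i | Delta i != 0) x / (4 * Delta i).
Proof.
move=> x0 z0; rewrite gap_sumE !mulr_sumr -big_split /=.
apply: ler_sum => i Di.
by apply: sqrtr_mul_le; rewrite ?Delta_gt0 ?sumr_ge0.
Qed.

End GapSum.

Section Expectation.
Context {R : realType} {d : measure_display} {Omega : measurableType d}.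
Variable P : probability Omega R.
Implicit Types f g : Omega -> R.

Lemma measurable_sum_cond (I : Type) (s : seq I) (Q : pred I)
    (h : I -> Omega -> R) :
  (forall i, measurable_fun setT (h i)) ->
  measurable_fun setT (fun w => \sum_(i <- s | Q i) h i w).
Proof.
move=> mh; under eq_fun do rewrite big_mkcond.
by apply: measurable_sum => i; case: (Q i) => //; exact: measurable_cst.
Qed.

Lemma Ex_sum (I : Type) (s : seq I) (f : I -> Omega -> R) :
  (forall i, measurable_fun setT (f i)) -> (forall i w, 0 <= f i w) ->
  Ex P (fun w => \sum_(i <- s) f i w) = \sum_(i <- s) Ex P (f i).
Proof.
move=> mf f0; rewrite /Ex; under eq_integral do rewrite -sumEFin.
apply: ge0_integral_sum => // [i|i w _]; last by rewrite lee_fin.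
exact/measurable_EFinP.
Qed.

Lemma Ex_scale (c : R) f : 0 <= c -> measurable_fun setT f ->
  (forall w, 0 <= f w) -> Ex P (fun w => c * f w) = (c%:E * Ex P f)%E.
Proof.
move=> c0 mf f0; rewrite /Ex; under eq_integral do rewrite EFinM.
apply: ge0_integralZl_EFin => //; last exact/measurable_EFinP.
by move=> w _; rewrite lee_fin.
Qed.

Lemma Ex_le_add_cst f g (c : R) :
  measurable_fun setT f -> measurable_fun setT g ->
  (forall w, 0 <= f w) -> (forall w, 0 <= g w) -> 0 <= c ->
  (forall w, f w <= g w + c) -> (Ex P f <= Ex P g + c%:E)%E.
Proof.
move=> mf mg f0 g0 c0 fgc.
have -> : c%:E = (\int[P]_w cst c%:E w)%E.
  by rewrite integral_cst //= probability_setT mule1.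
have mgE : measurable_fun setT (fun w => (g w)%:E) by exact/measurable_EFinP.
rewrite /Ex -ge0_integralD // => [|w _]; last by rewrite lee_fin.
apply: ge0_le_integral => //.
- by move=> w _; rewrite lee_fin.
- exact/measurable_EFinP.
- by apply: emeasurable_funD => //; exact: measurable_cst.
- by move=> w _; rewrite -EFinD lee_fin.
Qed.

Lemma measurable_gap_sum (K T : nat) (Delta : 'I_K -> R)
    (p : nat -> Omega -> 'I_K -> R) :
  (forall t i, measurable_fun setT (fun w => p t w i)) ->
  measurable_fun setT (fun w => gap_sum T Delta (fun t => p t w)).
Proof.
move=> mp; apply: measurable_sum => t; apply: measurable_sum => i.
by apply: measurable_funM => //; exact: measurable_cst.
Qed.

Lemma Ex_gap_sum (K T : nat) (Delta : 'I_K -> R)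
    (p : nat -> Omega -> 'I_K -> R) :
  (forall i, 0 <= Delta i) ->
  (forall t i, measurable_fun setT (fun w => p t w i)) ->
  (forall t w i, 0 <= p t w i) ->
  Ex P (fun w => gap_sum T Delta (fun t => p t w))
    = (\sum_(t < T) \sum_i Ex P (fun w => p t w i) * (Delta i)%:E)%E.
Proof.
move=> Delta_ge0 mp p0.
have mDp t i : measurable_fun setT (fun w => Delta i * p t w i).
  by apply: measurable_funM => //; exact: measurable_cst.
rewrite Ex_sum => [|t|t w]; last 2 first.
- by apply: measurable_sum => i; exact: mDp.
- by apply: sumr_ge0 => i _; rewrite mulr_ge0.
apply: eq_bigr => t _; rewrite Ex_sum => // [|i w]; last by rewrite mulr_ge0.
by apply: eq_bigr => i _; rewrite Ex_scale // muleC.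
Qed.

End Expectation.

Theorem lemma3 (R : realType) (d : measure_display) (Omega : measurableType d)
  (P : probability Omega R) (K T : nat)
  (p : nat -> Omega -> 'I_K -> R) (I : nat -> Omega -> 'I_K)
  (ell : nat -> Omega -> 'I_K -> R) (istar : 'I_K)
  (Delta : 'I_K -> R) (C : R)
  (* the learner's distributions p^t are random probability vectors *)
  (hp_meas : forall t i, measurable_fun setT (fun w => p t w i))
  (hp_ge0 : forall t w i, 0 <= p t w i)
  (hp_sum : forall t w, \sum_i p t w i = 1)
  (* the played arm i^t, with Pr[i^t = i] = E[p^t_i] *)
  (hI_meas : forall t i, measurable [set w | I t w = i])
  (hI_p : forall t i, Prob_arm P I t i = Ex P (fun w => p t w i))
  (* losses in [0,1]^K *)
  (hell_meas : forall t i, measurable_fun setT (fun w => ell t w i))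
  (hell01 : forall t w i, 0 <= ell t w i <= 1)
  (* i^star minimizes the expected cumulative loss *)
  (histar : forall j, (Ex P (fun w => (\sum_(t < T) ell t w istar)%R)
                        <= Ex P (fun w => (\sum_(t < T) ell t w j)%R))%E)
  (* self-bounding condition *)
  (hDelta : forall i, 0 <= Delta i <= 1)
  (hC : 0 <= C)
  (hV : exists i, Delta i != 0)
  (hself : (Reg P T I ell istar >=
            (\sum_(t < T) \sum_i Prob_arm P I t i * (Delta i)%:E) - C%:E)%E) :
  forall x z : R, 0 < x -> 0 < z ->
    (S1 P T Delta p x <= z%:E * (Reg P T I ell istar + C%:E)
                          + (z^-1 * (x / (4 * Delta_min Delta)))%:E)%E /\
    (S2 P T Delta p x <= z%:E * (Reg P T I ell istar + C%:E)
                          + (z^-1 * \sum_(i | Delta i != 0) x / (4 * Delta i))%:E)%E.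
Proof.
(* Only the self-bounding condition and Pr[i^t = i] = E[p^t_i] enter. *)
move=> x z /ltW x0 z0.
have Delta_ge0 i : 0 <= Delta i by case/andP: (hDelta i).
pose S w := gap_sum T Delta (fun t => p t w).
have mS : measurable_fun setT S by exact: measurable_gap_sum.
have S0 w : 0 <= S w by exact: gap_sum_ge0.
have ES :
    (Ex P (fun w => (z * S w)%R) <= z%:E * (Reg P T I ell istar + C%:E))%E.
  rewrite Ex_scale ?(ltW z0) // lee_pmul2l ?lte_fin // Ex_gap_sum //.
  under eq_bigr do under eq_bigr do rewrite -hI_p.
  by rewrite -leeBlDr.
have Ex_le_S (f : Omega -> R) (c : R) :
    measurable_fun setT f -> (forall w, 0 <= f w) -> 0 <= c ->
    (forall w, f w <= z * S w + c) ->
  (Ex P f <= z%:E * (Reg P T I ell istar + C%:E) + c%:E)%E.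
  move=> mf f0 c0 fSc; apply: le_trans (leeD2r _ ES).
  apply: Ex_le_add_cst => // [|w]; last by rewrite mulr_ge0 ?(ltW z0).
  by apply: measurable_funM => //; exact: measurable_cst.
have msqrt := continuous_measurable_fun (@sqrt_continuous R).
have z'0 : 0 <= z^-1 by rewrite invr_ge0 ltW.
split; apply: Ex_le_S => //.
- apply: measurableT_comp msqrt _; apply: measurable_funM => //.
  by apply: measurable_sum => t; exact: measurable_sum_cond.
- by rewrite mulr_ge0 ?divr_ge0 ?mulr_ge0 ?(ltW (Delta_min_gt0 _)).
- by move=> w; apply: sqrt_sum_le_gap_sum.
- apply: measurable_sum_cond => i /=; apply: measurableT_comp msqrt _.
  by apply: measurable_funM => //; exact: measurable_sum.
- by move=> w; apply: sumr_ge0 => i _; exact: sqrtr_ge0.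
- rewrite mulr_ge0 // sumr_ge0 // => i Di.
  by rewrite divr_ge0 ?mulr_ge0 ?(ltW (Delta_gt0 _ Di)).
- by move=> w; exact: sum_sqrt_le_gap_sum.
Qed.
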